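(* Assume the Nemytskii operator $\mathcal G(\boldsymbol\zeta)=\mathbf g(\cdot,\boldsymbol\zeta(\cdot))$ maps $L_t^2(\Gamma)$ into itself with $\|\mathcal G(\boldsymbol\zeta_1)-\mathcal G(\boldsymbol\zeta_2)\|_{L^2(\Gamma)}\le L_g\|\boldsymbol\zeta_1-\boldsymbol\zeta_2\|_{L^2(\Gamma)}$ for all $\boldsymbol\zeta_1,\boldsymbol\zeta_2\in L_t^2(\Gamma)$. If $C_{\rm tr}L_g<1$, then there is a unique $\mathbf E\in\mathbf X(\Omega)$ with $\mathcal A^{\rm tr}(\mathbf E;\mathbf V)=\langle\mathbf F^{\rm tr},\mathbf V\rangle$ for all $\mathbf V\in\mathbf X(\Omega)$, where $$\mathcal A^{\rm tr}(\mathbf E;\mathbf V)=\int_\Omega\big[\mu_r^{-1}(\nabla\times\mathbf E)\cdot(\nabla\times\overline{\mathbf V})-k^2\varepsilon_r\mathbf E\cdot\overline{\mathbf V}\big]d\boldsymbol x-\int_\Gamma\mathbf g(\cdot,\gamma_T\mathbf E)\cdot\gamma_T\overline{\mathbf V}\,ds+ik\langle\Lambda\gamma_t\mathbf E,\gamma_T\overline{\mathbf V}\rangle_{\Gamma_R}.$$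
   Context: Let $k>0$, $\varepsilon_0,\mu_0>0$, $\omega>0$. Let $D\subset\mathbb R^3$ be a bounded Lipschitz domain, $\Gamma=\partial D$, $\mathbf n$ the unit normal pointing out of $D$. Let $B_R$ be an open ball with $\overline D\subset B_R$, $\Gamma_R=\partial B_R$, and $\Omega=B_R$. $\mu_r=\mu_D/\mu_0$ in $D$, $=1$ outside; $\varepsilon_r=\varepsilon_0^{-1}(\varepsilon_D+i\sigma_D/\omega)$ in $D$, $=1$ outside, with $\mu_D,\varepsilon_D>0,\sigma_D\ge0$. Incident field $\mathbf E^i=\mathbf p e^{ik\mathbf d\cdot\boldsymbol x}$, $\mathbf d\in\mathbb S^2$, $\mathbf p\cdot\mathbf d=0$. $\gamma_t\mathbf u=\mathbf n\times\mathbf u$, $\gamma_T\mathbf u=\mathbf n\times(\mathbf u\times\mathbf n)$. $\Lambda$ is the electromagnetic Calderón operator on $\Gamma_R$ ($\Lambda\boldsymbol\xi=\gamma_t((ik)^{-1}\nabla\times\mathbf W)$ with $\mathbf W$ radiating solution of $\nabla\times\nabla\times\mathbf W-k^2\mathbf W=0$ outside $\overline{B_R}$, $\gamma_t\mathbf W=\boldsymbol\xi$), and $\langle\cdot,\cdot\rangle_{\Gamma_R}$ the $H^{-1/2}(\operatorname{div}_{\Gamma_R})$–$H^{-1/2}(\operatorname{curl}_{\Gamma_R})$ duality. $L_t^2(\Gamma)$: tangential $L^2$ fields. $\mathbf X(\Omega)=\{\mathbf E\in H(\operatorname{curl};\Omega):\gamma_T\mathbf E|_\Gamma\in L_t^2(\Gamma)\}$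 (the common tangential trace on $\Gamma$), with norm $\|\mathbf E\|^2_{H(\operatorname{curl})}+\|\gamma_T\mathbf E\|^2_{L^2(\Gamma)}$. $\langle\mathbf F^{\rm tr},\mathbf V\rangle=\langle ik\Lambda(\gamma_t\mathbf E^i)-\gamma_t(\nabla\times\mathbf E^i),\gamma_T\overline{\mathbf V}\rangle_{\Gamma_R}$. $\mathbf g:\Gamma\times\mathbb C^3\to\mathbb C^3$ Carathéodory and tangential. Standing fact: with $\langle\mathscr A_l^{\rm tr}\mathbf E,\mathbf V\rangle=\int_\Omega[\mu_r^{-1}(\nabla\times\mathbf E)\cdot(\nabla\times\overline{\mathbf V})-k^2\varepsilon_r\mathbf E\cdot\overline{\mathbf V}]d\boldsymbol x+ik\langle\Lambda\gamma_t\mathbf E,\gamma_T\overline{\mathbf V}\rangle_{\Gamma_R}$, for every $\mathbf f\in L_t^2(\Gamma)$ the problem $\langle\mathscr A^{\rm tr}_l\mathbf E,\mathbf V\rangle=\langle\mathbf F^{\rm tr},\mathbf V\rangle+\int_\Gamma\mathbf f\cdot\gamma_T\overline{\mathbf V}ds$ $\forall\mathbf V\in\mathbf X(\Omega)$ has a unique solution in $\mathbf X(\Omega)$, and solutions for data $\mathbf f_1,\mathbf f_2$ satisfy $\|\mathbf E_1-\mathbf E_2\|_{\mathbf X(\Omega)}\le C_{\rm tr}\|\mathbf f_1-\mathbf f_2\|_{L^2(\Gamma)}$. *)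

From HB Require Import structures.
From mathcomp Require Import all_boot all_order all_algebra.
From mathcomp Require Import all_classical all_reals all_analysis.
From mathcomp.real_closed Require Import complex.
Import numFieldNormedType.Exports.
Set Implicit Arguments. Unset Strict Implicit. Unset Printing Implicit Defensive.
Import Order.TTheory GRing.Theory Num.Theory.
Local Open Scope ring_scope.

Section Defs.
Variable R : realType.
(* X = X(Omega) (complete, norm = X(Omega)-norm), Y = L_t^2(Gamma). *)
Variables (X Y : completeNormedModType R).

(* The norm of X(Omega): ||E||_X^2 = ||E||_{H(curl)}^2 + ||gamma_T E||_{L^2(Gamma)}^2. *)
Definition Xnorm_splits (gT : X -> Y) : Prop :=
  exists nHcurl : X -> R, forall E, `|E| ^+ 2 = nHcurl E ^+ 2 + `|gT E| ^+ 2.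

(* Boundary pairing  int_Gamma f . gamma_T(conj V) ds  via an abstract
   L^2(Gamma) pairing pY. *)
Definition bdry_pair (pY : Y -> Y -> R[i]) (gT : X -> Y) (f : Y) (V : X) : R[i] :=
  pY f (gT V).

Definition solves_linear (Al : X -> X -> R[i]) (F : X -> R[i])
  (pY : Y -> Y -> R[i]) (gT : X -> Y) (f : Y) (E : X) : Prop :=
  forall V : X, Al E V = F V + bdry_pair pY gT f V.

Definition linear_wellposed (Al : X -> X -> R[i]) (F : X -> R[i])
  (pY : Y -> Y -> R[i]) (gT : X -> Y) (Ctr : R) : Prop :=
  (forall f : Y, exists! E : X, solves_linear Al F pY gT f E) /\
  (forall (f1 f2 : Y) (E1 E2 : X),
      solves_linear Al F pY gT f1 E1 -> solves_linear Al F pY gT f2 E2 ->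
      `|E1 - E2| <= Ctr * `|f1 - f2|).

(* Nonlinear form A^tr(E;V) = <A_l E, V> - int_Gamma g(., gamma_T E) . gamma_T(conj V) ds,
   with G the Nemytskii operator of g. *)
Definition A_tr (Al : X -> X -> R[i]) (pY : Y -> Y -> R[i]) (gT : X -> Y)
  (G : Y -> Y) (E V : X) : R[i] :=
  Al E V - bdry_pair pY gT (G (gT E)) V.

Definition lipschitz_with (G : Y -> Y) (Lg : R) : Prop :=
  forall z1 z2 : Y, `|G z1 - G z2| <= Lg * `|z1 - z2|.

End Defs.

From HB Require Import structures.
From mathcomp Require Import all_boot all_order all_algebra.
From mathcomp Require Import all_classical all_reals all_analysis.
From mathcomp.real_closed Require Import complex.
Import numFieldNormedType.Exports.
Import Order.TTheory GRing.Theory Num.Theory.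
Local Open Scope ring_scope.

(* E solves the nonlinear problem iff it solves the linear one with boundary
   datum G (gT E), i.e. iff E is a fixed point of S \o G \o gT, where S is the
   solution map of the linear problem.  S is Ctr-Lipschitz by the stability
   estimate, G is Lg-Lipschitz, and the trace gT is 1-Lipschitz because the
   X-norm dominates the L^2 norm of the trace; so the composite is a
   contraction and Banach's fixed point theorem applies. *)

Section lipschitz_constants.
Context {R : realFieldType} {U V W : normedModType R}.

Lemma lipschitz_max0 {f : U -> V} {k : R} :
  (forall x y, `|f x - f y| <= k * `|x - y|) ->
  forall x y, `|f x - f y| <= Num.max k 0 * `|x - y|.
Proof.
move=> fk x y; apply: le_trans (fk x y) _.
by rewrite ler_wpM2r // le_max lexx.
Qed.

Lemma lipschitz_comp {f : V -> W} {g : U -> V} {k l : R} : 0 <= k ->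
  (forall x y, `|f x - f y| <= k * `|x - y|) ->
  (forall x y, `|g x - g y| <= l * `|x - y|) ->
  forall x y, `|f (g x) - f (g y)| <= k * l * `|x - y|.
Proof.
move=> k0 fk gl x y; apply: le_trans (fk _ _) _.
by rewrite -mulrA ler_wpM2l.
Qed.

End lipschitz_constants.

Lemma mul_max0_lt1 {R : realDomainType} {a b : R} :
  a * b < 1 -> Num.max a 0 * Num.max b 0 < 1.
Proof.
have [a0|a0] := leP 0 a; have [b0|b0] := leP 0 b;
  by rewrite ?(max_idPl a0) ?(max_idPl b0) ?max_r ?ltW ?mul0r ?mulr0 ?ltr01.
Qed.

Lemma contraction_exists_unique_fixpoint {R : realType}
    {X : completeNormedModType R} {T : X -> X} {q : R} : q < 1 ->
  (forall x y, `|T x - T y| <= q * `|x - y|) -> exists! x, T x = x.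
Proof.
move=> q1 Tq; have q0 : 0 <= Num.max q 0 by rewrite le_max lexx orbT.
have ctrT : is_contraction (totalfun_ setT T : {fun [set: X] >-> [set: X]}).
  exists (NngNum q0); split; first by rewrite gt_max q1 ltr01.
  by case=> x y _; exact: lipschitz_max0.
have [x _ Tx] := banach_fixed_point ctrT closedT (ex_intro _ 0 I).
exists x; split=> [|y Ty]; first exact: esym Tx.
exact: contraction_fixpoint_unique ctrT I I Tx (esym Ty).
Qed.

Section linear_problem.
Context {R : realType} {X Y : completeNormedModType R}.
Context {Al : X -> X -> R[i]} {F : X -> R[i]} {pY : Y -> Y -> R[i]}.
Context {gT : X -> Y}.

Lemma Xnorm_splits_trace_le : Xnorm_splits gT -> forall E, `|gT E| <= `|E|.
Proof.
move=> [nHcurl nE] E.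
by rewrite -ler_sqr ?nnegrE // nE lerDr sqr_ge0.
Qed.

Lemma A_tr_solves_linearE (G : Y -> Y) (E : X) :
  (forall V, A_tr Al pY gT G E V = F V) <->
  solves_linear Al F pY gT (G (gT E)) E.
Proof.
rewrite /A_tr; split=> sol V; have := sol V.
  by move=> <-; rewrite subrK.
by move=> ->; rewrite addrK.
Qed.

Lemma linear_wellposed_solution_map {Ctr : R} :
  linear_wellposed Al F pY gT Ctr ->
  exists S : Y -> X,
    (forall f E, solves_linear Al F pY gT f E <-> E = S f) /\
    (forall f1 f2, `|S f1 - S f2| <= Ctr * `|f1 - f2|).
Proof.
move=> [uniq_sol stab].
pose S f := proj1_sig (cid (uniq_sol f)).
have solS f : solves_linear Al F pY gT f (S f) by rewrite /S; case: cid => ? [].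
exists S; split=> [f E|f1 f2]; last exact: stab.
split=> [solE|->] //; have [E' [_ uniqE']] := uniq_sol f.
by rewrite -(uniqE' _ solE) (uniqE' _ (solS f)).
Qed.

End linear_problem.

Theorem corollary2p4 (R : realType) (X Y : completeNormedModType R)
  (gT : X -> Y) (Al : X -> X -> R[i]) (F : X -> R[i]) (pY : Y -> Y -> R[i])
  (G : Y -> Y) (Ctr Lg : R) :
  (forall E1 E2 : X, gT (E1 - E2) = gT E1 - gT E2) ->
  Xnorm_splits gT ->
  linear_wellposed Al F pY gT Ctr ->
  lipschitz_with G Lg ->
  Ctr * Lg < 1 ->
  exists! E : X, forall V : X, A_tr Al pY gT G E V = F V.
Proof.
move=> gTB /Xnorm_splits_trace_le gT_le wellposed lipG CLg1.
have [S [solS lipS]] := linear_wellposed_solution_map wellposed.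
(* Neither [Ctr] nor [Lg] is assumed nonnegative: clip both at 0. *)
have lipGgT x y : `|G (gT x) - G (gT y)| <= Num.max Lg 0 * `|x - y|.
  apply: le_trans (lipschitz_max0 lipG (gT x) (gT y)) _.
  by rewrite ler_wpM2l ?le_max ?lexx ?orbT // -gTB gT_le.
have Ctr0 : 0 <= Num.max Ctr 0 by rewrite le_max lexx orbT.
have lipT := lipschitz_comp Ctr0 (lipschitz_max0 lipS) lipGgT.
have [E [fixE uniqE]] :=
  contraction_exists_unique_fixpoint (mul_max0_lt1 CLg1) lipT.
have solE E' : (forall V, A_tr Al pY gT G E' V = F V) <-> S (G (gT E')) = E'.
  by rewrite A_tr_solves_linearE solS; split=> /esym.
by exists E; split=> [|E' /solE /uniqE]; first exact/solE.
Qed.
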